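(* Let $V$ be a commutative unital quantale whose underlying lattice is a frame. If $(X,a,+)$ and $(Y,b,+)$ are $V$-groups and $f\colon X\to Y$ is a group homomorphism, then $f$ is a $V$-functor if and only if $a(0,x)\le b(0,f(x))$ for every $x\in X$.
   Context: A commutative unital quantale $V$ is a complete lattice with a commutative associative operation $\otimes$ with unit $k$ preserving arbitrary joins in each variable. A $V$-category $(X,a)$: $a\colon X\times X\to V$ with $k\le a(x,x)$ and $a(x,x')\otimes a(x',x'')\le a(x,x'')$. A $V$-functor $f\colon(X,a)\to(Y,b)$ satisfies $a(x,x')\le b(f(x),f(x'))$ for all $x,x'$. A $V$-group $(X,a,+)$ is a $V$-category with a group structure (additive, not necessarily abelian) such that $a(x_1,x_2)\otimes a(x_1',x_2')\le a(x_1+x_1',x_2+x_2')$. *)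

(** Commutative unital quantale: a complete lattice (partial order with
    arbitrary joins of subsets, given as predicates), with a commutative
    associative operation [qtens] with unit [qk] preserving arbitrary joins
    in each variable (by commutativity, preservation in the right variable
    suffices). *)
Record quantale := Quantale {
  qcar :> Type;
  qle : qcar -> qcar -> Prop;
  qle_refl : forall x, qle x x;
  qle_trans : forall x y z, qle x y -> qle y z -> qle x z;
  qle_antisym : forall x y, qle x y -> qle y x -> x = y;
  qsup : (qcar -> Prop) -> qcar;
  qsup_ub : forall (S : qcar -> Prop) x, S x -> qle x (qsup S);
  qsup_least : forall (S : qcar -> Prop) y,
      (forall x, S x -> qle x y) -> qle (qsup S) y;
  qtens : qcar -> qcar -> qcar;
  qk : qcar;
  qtensA : forall x y z, qtens x (qtens y z) = qtens (qtens x y) z;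
  qtensC : forall x y, qtens x y = qtens y x;
  qtens1 : forall x, qtens qk x = x;
  qtens_sup : forall x (S : qcar -> Prop),
      qtens x (qsup S) = qsup (fun z => exists y, S y /\ z = qtens x y)
}.

Definition qmeet (V : quantale) (x y : V) : V :=
  qsup V (fun z => qle V z x /\ qle V z y).

Definition is_frame (V : quantale) : Prop :=
  forall (x : V) (S : V -> Prop),
    qmeet V x (qsup V S) = qsup V (fun z => exists y, S y /\ z = qmeet V x y).

Record group := Group {
  gcar :> Type;
  gadd : gcar -> gcar -> gcar;
  gzero : gcar;
  gopp : gcar -> gcar;
  gaddA : forall x y z, gadd x (gadd y z) = gadd (gadd x y) z;
  gadd0l : forall x, gadd gzero x = x;
  gadd0r : forall x, gadd x gzero = x;
  gaddNl : forall x, gadd (gopp x) x = gzero;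
  gaddNr : forall x, gadd x (gopp x) = gzero
}.

Definition group_hom (X Y : group) (f : X -> Y) : Prop :=
  forall x y, f (gadd X x y) = gadd Y (f x) (f y).

Definition is_Vcat (V : quantale) (X : Type) (a : X -> X -> V) : Prop :=
  (forall x, qle V (qk V) (a x x)) /\
  (forall x x' x'', qle V (qtens V (a x x') (a x' x'')) (a x x'')).

Definition is_Vfunctor (V : quantale) (X Y : Type)
  (a : X -> X -> V) (b : Y -> Y -> V) (f : X -> Y) : Prop :=
  forall x x', qle V (a x x') (b (f x) (f x')).

Definition is_Vgroup (V : quantale) (X : group) (a : X -> X -> V) : Prop :=
  is_Vcat V X a /\
  (forall x1 x2 x1' x2',
      qle V (qtens V (a x1 x2) (a x1' x2')) (a (gadd X x1 x1') (gadd X x2 x2'))).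

(** In a V-group, tensoring with [k <= a(y,y)] shows that left translation by
    [y] is a V-functor; translating back and forth gives
    [a(x,x') = a(0,-x+x')].  A group homomorphism preserves [0], [-] and [+],
    so the V-functor inequality at [(x,x')] is the given inequality at
    [-x+x']. *)


Section QuantaleFacts.

Variable V : quantale.

Lemma qsup_le (v : V) : qsup V (fun z => qle V z v) = v.
Proof.
  apply qle_antisym.
  - apply qsup_least; intros x Hx; exact Hx.
  - apply qsup_ub, qle_refl.
Qed.

Lemma qtens_monor (w u v : V) :
  qle V u v -> qle V (qtens V w u) (qtens V w v).
Proof.
  intros Huv.
  rewrite <- (qsup_le v), qtens_sup.
  apply qsup_ub; exists u; split; [exact Huv | reflexivity].
Qed.

Lemma qle_tensl (u w : V) : qle V (qk V) u -> qle V w (qtens V u w).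
Proof.
  intros Hku.
  apply qle_trans with (qtens V (qk V) w).
  - rewrite qtens1; apply qle_refl.
  - rewrite !(qtensC V _ w).
    now apply qtens_monor.
Qed.

End QuantaleFacts.

Section GroupHomFacts.

Variables (X Y : group) (f : X -> Y).
Hypothesis Hf : group_hom X Y f.

Lemma group_hom_zero : f (gzero X) = gzero Y.
Proof.
  assert (Hidem : gadd Y (f (gzero X)) (f (gzero X)) = f (gzero X)).
  { now rewrite <- Hf, gadd0l. }
  rewrite <- (gadd0l Y (f (gzero X))), <- (gaddNl Y (f (gzero X))).
  now rewrite <- gaddA, Hidem.
Qed.

Lemma group_hom_opp (x : X) : f (gopp X x) = gopp Y (f x).
Proof.
  assert (Hinv : gadd Y (f (gopp X x)) (f x) = gzero Y).
  { now rewrite <- Hf, gaddNl, group_hom_zero. }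
  rewrite <- (gadd0r Y (f (gopp X x))), <- (gaddNr Y (f x)), gaddA, Hinv.
  apply gadd0l.
Qed.

End GroupHomFacts.

Section VgroupFacts.

Variables (V : quantale) (X : group) (a : X -> X -> V).
Hypothesis Ha : is_Vgroup V X a.

Lemma Vgroup_translatel (y x x' : X) :
  qle V (a x x') (a (gadd X y x) (gadd X y x')).
Proof.
  destruct Ha as [[Ha_refl _] Ha_add].
  apply qle_trans with (qtens V (a y y) (a x x')).
  - apply qle_tensl, Ha_refl.
  - apply Ha_add.
Qed.

Lemma Vgroup_dist_zero (x x' : X) :
  a x x' = a (gzero X) (gadd X (gopp X x) x').
Proof.
  apply qle_antisym.
  - rewrite <- (gaddNl X x).
    apply Vgroup_translatel.
  - apply qle_trans with (a (gadd X x (gzero X)) (gadd X x (gadd X (gopp X x) x'))).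
    + apply Vgroup_translatel.
    + rewrite gadd0r, gaddA, gaddNr, gadd0l.
      apply qle_refl.
Qed.

End VgroupFacts.

Theorem corollary3p3 (V : quantale) (HV : is_frame V)
  (X Y : group) (a : X -> X -> V) (b : Y -> Y -> V)
  (Ha : is_Vgroup V X a) (Hb : is_Vgroup V Y b)
  (f : X -> Y) (Hf : group_hom X Y f) :
  is_Vfunctor V X Y a b f <->
  (forall x : X, qle V (a (gzero X) x) (b (gzero Y) (f x))).
Proof.
  split.
  - intros Hfun x.
    rewrite <- (group_hom_zero X Y f Hf).
    apply Hfun.
  - intros Hzero x x'.
    rewrite (Vgroup_dist_zero V X a Ha), (Vgroup_dist_zero V Y b Hb).
    rewrite <- (group_hom_opp X Y f Hf), <- Hf.
    apply Hzero.
Qed.
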